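(* Let $\sigma=(a_1,\ldots,a_s)$ be a partition of $r$ with $a_1\ge\cdots\ge a_s\ge1$, and let $n\ge s$ and $q\ge a_1$ be integers. Then for every $k$ with $1\le k\le r-1$ there exists at least one $(q,k,\sigma)$-feasible sequence $(b_1,\ldots,b_n)$.
   Context: A sequence $B=(b_1,\ldots,b_n)$ of non-negative integers is $(q,k,\sigma)$-feasible if $b_1\ge b_2\ge\cdots\ge b_n$, $b_j=b_s$ for all $j\ge s$, $q\ge\max\{a_1,b_1\}$, and $\sum_{i=1}^{s}\min\{a_i,b_i\}=k$. *)

(* Sequences are 0-indexed: a_i = nth 0 a (i-1), b_j = nth 0 b (j-1). *)
From mathcomp Require Import all_boot.
Set Implicit Arguments. Unset Strict Implicit. Unset Printing Implicit Defensive.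

Definition is_partition (r : nat) (a : seq nat) : Prop :=
  sorted geq a /\ all (fun x => 0 < x) a /\ sumn a = r.

Definition feasible (q k : nat) (a b : seq nat) : Prop :=
  let s := size a in
  let n := size b in
  sorted geq b /\
  (forall j, s <= j <= n -> nth 0 b (j.-1) = nth 0 b (s.-1)) /\
  maxn (nth 0 a 0) (nth 0 b 0) <= q /\
  \sum_(i < s) minn (nth 0 a i) (nth 0 b i) = k.

(* Take b_j = c + [j < t] with c < a_1 and t < s. Its score
   F(c, t) = \sum_i min(a_i, c + [i < t]) grows by at most one when t is
   incremented, F(c, s) = F(c + 1, 0), F(0, 0) = 0 and F(a_1, 0) = r, so
   walking through the pairs (c, t) in lexicographic order hits every k < r. *)
From mathcomp Require Import all_boot.
From mathcomp Require Import zify.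

Lemma nat_bracket (g : nat -> nat) k N :
  g 0 <= k < g N -> exists2 m, m < N & g m <= k < g m.+1.
Proof.
elim: N => [|N IHN] /andP[g0k ltk]; first by move: (leq_ltn_trans g0k ltk); rewrite ltnn.
have [ltkN | leNk] := ltnP k (g N); last by exists N => //; apply/andP.
by have [m ltmN ?] := IHN (introT andP (conj g0k ltkN)); exists m => //; apply: ltnW.
Qed.

Section StairSequence.

Variable a : seq nat.

Definition stair (c t j : nat) : nat := c + (j < t).

Definition stair_score (c t : nat) : nat :=
  \sum_(i < size a) minn (nth 0 a i) (stair c t i).

Lemma stair_score00 : stair_score 0 0 = 0.
Proof. by rewrite /stair_score big1 // => i _; rewrite minn0. Qed.

Lemma stair_score_wrap c : stair_score c (size a) = stair_score c.+1 0.
Proof. by apply: eq_bigr => i _; rewrite /stair ltn_ord ltn0 addn1 addn0. Qed.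

Lemma stair_score_top : sorted geq a -> stair_score (nth 0 a 0) 0 = sumn a.
Proof.
move=> sorted_a; rewrite sumnE (big_nth 0) big_mkord.
apply: eq_bigr => i _; rewrite /stair ltn0 addn0; apply/minn_idPl.
have geq_trans : transitive geq by move=> x y z /= le_yx le_zy; apply: leq_trans le_zy le_yx.
by apply: (sorted_leq_nth geq_trans (fun x => leqnn x) 0 sorted_a); rewrite ?inE //;
  apply: leq_ltn_trans (ltn_ord i).
Qed.

Lemma stair_scoreS c t : stair_score c t.+1 <= (stair_score c t).+1.
Proof.
have [lt_ts | le_st] := ltnP t (size a); last first.
  have -> : stair_score c t.+1 = stair_score c t.
    apply: eq_bigr => i _; have lt_it := leq_trans (ltn_ord i) le_st.
    by rewrite /stair lt_it ltnS ltnW.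
  exact: leqnSn.
rewrite /stair_score (bigD1 (Ordinal lt_ts)) // [X in _ <= X.+1](bigD1 (Ordinal lt_ts)) //=.
rewrite -addSn; apply: leq_add.
  by rewrite /stair ltnSn ltnn; lia.
apply/eq_leq/eq_bigr => i; rewrite -val_eqE /= => /negbTE neq_it.
by rewrite /stair ltnS leq_eqVlt neq_it.
Qed.

Lemma stair_feasible q c t n :
  t < size a -> size a <= n -> c < q -> nth 0 a 0 <= q ->
  feasible q (stair_score c t) a (mkseq (stair c t) n).
Proof.
move=> lt_ts le_sn lt_cq le_a1q; split; [|split; [|split]].
- rewrite sorted_map; apply: (sub_sorted _ (iota_sorted 0 n)) => x y /= le_xy.
  by rewrite leq_add2l; case: (ltnP y t) => // lt_yt; rewrite (leq_ltn_trans le_xy lt_yt).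
- move=> j /andP[le_sj]; rewrite size_mkseq => le_jn.
  by rewrite !nth_mkseq /stair; lia.
- by rewrite nth_mkseq /stair ?geq_max; lia.
- by apply: eq_bigr => i _; rewrite nth_mkseq // (leq_trans (ltn_ord i)).
Qed.

End StairSequence.

Theorem lemma2p6 (r : nat) (a : seq nat) (n q : nat) :
  is_partition r a ->
  size a <= n ->
  nth 0 a 0 <= q ->
  forall k, 1 <= k <= r - 1 ->
  exists b : seq nat, size b = n /\ feasible q k a b.
Proof.
move=> [sorted_a [_ sum_a]] le_sn le_a1q k /andP[k_gt0 le_kr].
have [c lt_ca1 /andP[le_k ltk]] :
    exists2 c, c < nth 0 a 0 & stair_score a c 0 <= k < stair_score a c.+1 0.
  by apply: nat_bracket; rewrite stair_score00 stair_score_top // sum_a; lia.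
have [t lt_ts /andP[le_kt ltkt]] :
    exists2 t, t < size a & stair_score a c t <= k < stair_score a c t.+1.
  by apply: nat_bracket; rewrite stair_score_wrap le_k.
have score_k : stair_score a c t = k by have := stair_scoreS a c t; lia.
exists (mkseq (stair c t) n); rewrite size_mkseq -score_k; split => //.
by apply: stair_feasible => //; apply: leq_trans le_a1q.
Qed.
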